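(* Let $N\ge 2$ be an integer and $\kappa,m>0$. For every fixed $k_1\in\mathbb{Z}\cap(0,N)$, $$\sum_{\substack{k_2,k_3,k_4\in\mathbb{Z}\cap(0,N)\\ k_1-k_2-k_3-k_4\equiv 0\ (\mathrm{mod}\ N)}}\big|A^{(1)}_{1,2,3,4}\big|^2\le C\,N^2,$$ with $C>0$ depending only on $\kappa,m$.
   Context: For an integer $N\ge 2$ and constants $\kappa,m>0$, define for $k\in\mathbb{Z}$ the frequency $\omega_k=2\sqrt{\kappa/m}\,\big|\sin(\pi k/N)\big|$ and the $2N$-periodic sign function $\iota(x)=\operatorname{sgn}\sin(\pi x/N)$. For integers $k_1,k_2,k_3,k_4$ set $$T_{1,2,3,4}=-\frac{3}{4\kappa^2}\,\iota(k_2+k_3+k_4)\,\iota(k_2)\,\iota(k_3)\,\iota(k_4)\prod_{i=1}^4\sqrt{\omega_{k_i}},\qquad A^{(1)}_{1,2,3,4}=-\frac{T_{1,2,3,4}}{\omega_{k_1}-\omega_{k_2}-\omega_{k_3}-\omega_{k_4}}.$$ On the summation range (all $k_i\in\mathbb{Z}\cap(0,N)$, $k_1\equiv k_2+k_3+k_4$ mod $N$) the denominator does not vanish. *)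

From Stdlib Require Import Reals Lra Lia Arith List.
Open Scope R_scope.

Definition Rsgn (x : R) : R :=
  if Rlt_dec 0 x then 1 else if Rlt_dec x 0 then -1 else 0.

Definition omega (kappa m : R) (N : nat) (k : nat) : R :=
  2 * sqrt (kappa / m) * Rabs (sin (PI * INR k / INR N)).

Definition iota (N : nat) (x : nat) : R := Rsgn (sin (PI * INR x / INR N)).

Definition Tcoef (kappa m : R) (N k1 k2 k3 k4 : nat) : R :=
  - (3 / (4 * kappa ^ 2)) * iota N (k2 + k3 + k4) * iota N k2 * iota N k3 * iota N k4
  * (sqrt (omega kappa m N k1) * sqrt (omega kappa m N k2)
     * sqrt (omega kappa m N k3) * sqrt (omega kappa m N k4)).

Definition A1 (kappa m : R) (N k1 k2 k3 k4 : nat) : R :=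
  - Tcoef kappa m N k1 k2 k3 k4 /
    (omega kappa m N k1 - omega kappa m N k2 - omega kappa m N k3 - omega kappa m N k4).

Definition sum_open (N : nat) (f : nat -> R) : R :=
  fold_right Rplus 0 (map f (seq 1 (N - 1))).

Definition S1 (kappa m : R) (N k1 : nat) : R :=
  sum_open N (fun k2 => sum_open N (fun k3 => sum_open N (fun k4 =>
    if Nat.eq_dec ((k2 + k3 + k4) mod N) (k1 mod N)
    then (Rabs (A1 kappa m N k1 k2 k3 k4)) ^ 2 else 0))).

(* Write θ_k = π k / N.  Since ω_k is proportional to sin θ_k and the ι's are signs,
   |A^(1)|² ≤ K Q with a constant K = K(κ, m) and
     Q = sin θ1 sin θ2 sin θ3 sin θ4 / (sin θ1 - sin θ2 - sin θ3 - sin θ4)²,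
   and k2 + k3 + k4 = k1 + jN with j ∈ {0, 1, 2}, i.e. θ2 + θ3 + θ4 = θ1 + jπ.
   In the coordinates u = tan (θ/2), Q becomes a rational function of the elementary
   symmetric polynomials of u2, u3, u4, and one finds Q ≤ 16/θ1² for j = 0 and Q ≤ 1/4
   for j = 1; since θ ↦ π - θ exchanges the cases j = 0 and j = 2, Q ≤ 16/(π - θ1)²
   for j = 2.  Case j = 0 forces k2, k3 < k1 and case j = 2 forces k2, k3 > k1, while k4
   is determined by k2, k3 modulo N, so the sum is at most
   K (N²/4 + 16 k1²/θ1² + 16 (N - k1)²/(π - θ1)²) = K (1/4 + 32/π²) N². *)

From Pilot Require Import Defs.
From Stdlib Require Import Reals Lra Lia Psatz List.
Open Scope R_scope.

Lemma pair_sums_prod_ge_8_prod (u v w : R) : 0 <= u -> 0 <= v -> 0 <= w ->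
  8 * (u * v * w) <= (u + v) * (v + w) * (w + u).
Proof.
  intros hu hv hw.
  assert (0 <= u * (v - w) ^ 2) by (apply Rmult_le_pos; [lra | apply pow2_ge_0]).
  assert (0 <= v * (w - u) ^ 2) by (apply Rmult_le_pos; [lra | apply pow2_ge_0]).
  assert (0 <= w * (u - v) ^ 2) by (apply Rmult_le_pos; [lra | apply pow2_ge_0]).
  nra.
Qed.

Lemma sum_pair_prods_sq_ge (u v w : R) :
  3 * ((u + v + w) * (u * v * w)) <= (u * v + v * w + w * u) ^ 2.
Proof.
  pose proof (pow2_ge_0 (u * v - v * w)); pose proof (pow2_ge_0 (v * w - w * u));
  pose proof (pow2_ge_0 (w * u - u * v)).
  nra.
Qed.

Lemma sum_cube_prod_le_pair_sums_prod_sq (u v w : R) : 0 < u -> 0 < v -> 0 < w ->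
  64 * ((u + v + w) ^ 3 * (u * v * w)) <= 27 * ((u + v) * (v + w) * (w + u)) ^ 2.
Proof.
  intros hu hv hw.
  set (e1 := u + v + w); set (e2 := u * v + v * w + w * u); set (e3 := u * v * w);
  set (P := (u + v) * (v + w) * (w + u)).
  assert (hP : P = e1 * e2 - e3) by (unfold P, e1, e2, e3; ring).
  assert (h8 : 8 * e3 <= P) by (apply pair_sums_prod_ge_8_prod; lra).
  assert (h3 : 3 * (e1 * e3) <= e2 ^ 2) by apply sum_pair_prods_sq_ge.
  assert (he1 : 0 < e1) by (unfold e1; lra).
  assert (he2 : 0 < e2) by (unfold e2; nra).
  assert (he3 : 0 < e3) by (unfold e3; apply Rmult_lt_0_compat; nra).
  assert (h9 : 0 <= 8 * (e1 * e2) <= 9 * P) by nra.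
  assert (64 * (e1 * e2) ^ 2 <= 81 * P ^ 2) by nra.
  nra.
Qed.

Lemma pair_sums_prod_sq_bound (u v w S : R) : 0 < u -> 0 < v -> 0 < w ->
  0 < (u + v + w) - u * v * w -> 0 < 1 - (u * v + v * w + w * u) ->
  0 <= S <= 6 * (u + v + w) ->
  u * v * w * (((u + v + w) - u * v * w) * (1 - (u * v + v * w + w * u))) * S ^ 2 <=
  16 * ((u + v) * (v + w) * (w + u)) ^ 2.
Proof.
  intros hu hv hw ha hb hS.
  pose proof (sum_cube_prod_le_pair_sums_prod_sq u v w hu hv hw) as h.
  set (e1 := u + v + w) in *; set (e2 := u * v + v * w + w * u) in *; set (e3 := u * v * w) in *.
  assert (he3 : 0 < e3) by (unfold e3; apply Rmult_lt_0_compat; nra).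
  assert (0 <= e2) by (unfold e2; nra).
  assert (0 <= (e1 - e3) * (1 - e2) <= e1) by (split; nra).
  assert (0 <= S ^ 2 <= 36 * e1 ^ 2) by (split; nra).
  assert (e3 * ((e1 - e3) * (1 - e2)) * S ^ 2 <= e3 * e1 * (36 * e1 ^ 2))
    by (apply Rmult_le_compat; nra).
  (* 36 * 27 / 64 < 16 *)
  nra.
Qed.

Lemma one_add_tan_sq (a : R) : cos a <> 0 -> 1 + tan a ^ 2 = / cos a ^ 2.
Proof.
  intros hc. pose proof (sin2_cos2 a) as h. unfold Rsqr in h.
  unfold tan. field_simplify_eq; [nra | auto].
Qed.

Lemma sin_tan_half (x : R) : cos (x / 2) <> 0 ->
  sin x = 2 * tan (x / 2) / (1 + tan (x / 2) ^ 2).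
Proof.
  intros hc. rewrite one_add_tan_sq by exact hc.
  replace x with (2 * (x / 2)) at 1 by field. rewrite sin_2a.
  unfold tan. field. auto.
Qed.

Lemma sin_add3_tan (a b c : R) : cos a <> 0 -> cos b <> 0 -> cos c <> 0 ->
  sin (a + b + c) = cos a * cos b * cos c * (tan a + tan b + tan c - tan a * tan b * tan c).
Proof. intros. unfold tan. rewrite ?sin_plus, ?cos_plus, ?sin_plus. field. auto. Qed.

Lemma cos_add3_tan (a b c : R) : cos a <> 0 -> cos b <> 0 -> cos c <> 0 ->
  cos (a + b + c) =
  cos a * cos b * cos c * (1 - (tan a * tan b + tan b * tan c + tan c * tan a)).
Proof. intros. unfold tan. rewrite ?sin_plus, ?cos_plus, ?sin_plus. field. auto. Qed.

Lemma cos_half_pos (x : R) : 0 < x < PI -> 0 < cos (x / 2).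
Proof. intros. apply cos_gt_0; lra. Qed.

Lemma tan_half_pos (x : R) : 0 < x < PI -> 0 < tan (x / 2).
Proof. intros. apply tan_gt_0; lra. Qed.

Lemma le_3_sin (a : R) : 0 <= a <= 2 -> a <= 3 * sin a.
Proof.
  (* [a - a ^ 3 / 6 <= sin a] *)
  intros ha. destruct (pre_sin_bound a 0 ltac:(lra) ltac:(lra)) as [h _].
  unfold sin_approx, sin_term in h. simpl in h. nra.
Qed.

Lemma le_6_tan_half (x : R) : 0 < x < PI -> x <= 6 * tan (x / 2).
Proof.
  intros hx. pose proof PI_4.
  assert (hc := cos_half_pos x hx). assert (hs : 0 < sin (x / 2)) by (apply sin_gt_0; lra).
  assert (x / 2 <= 3 * sin (x / 2)) by (apply le_3_sin; lra).
  assert (cos (x / 2) <= 1) by apply COS_bound.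
  assert (sin (x / 2) <= tan (x / 2)).
  { unfold tan. apply (Rmult_le_reg_r (cos (x / 2))); [lra |].
    replace (sin (x / 2) / cos (x / 2) * cos (x / 2)) with (sin (x / 2)) by (field; lra). nra. }
  lra.
Qed.

Section HalfAngleTangents.
Variables x y z : R.
Hypotheses (hx : 0 < x < PI) (hy : 0 < y < PI) (hz : 0 < z < PI).

Let u := tan (x / 2).
Let v := tan (y / 2).
Let w := tan (z / 2).
Let e1 := u + v + w.
Let e2 := u * v + v * w + w * u.
Let e3 := u * v * w.
Let C := cos (x / 2) * cos (y / 2) * cos (z / 2).
Let U := (1 + u ^ 2) * (1 + v ^ 2) * (1 + w ^ 2).

Let hu : 0 < u := tan_half_pos x hx.
Let hv : 0 < v := tan_half_pos y hy.
Let hw : 0 < w := tan_half_pos z hz.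
Let hcx : 0 < cos (x / 2) := cos_half_pos x hx.
Let hcy : 0 < cos (y / 2) := cos_half_pos y hy.
Let hcz : 0 < cos (z / 2) := cos_half_pos z hz.

Let hU : 0 < U.
Proof. unfold U. pose proof (pow2_ge_0 u); pose proof (pow2_ge_0 v); pose proof (pow2_ge_0 w).
  repeat apply Rmult_lt_0_compat; lra. Qed.

Let sin_x : sin x = 2 * u / (1 + u ^ 2).
Proof. apply sin_tan_half; lra. Qed.
Let sin_y : sin y = 2 * v / (1 + v ^ 2).
Proof. apply sin_tan_half; lra. Qed.
Let sin_z : sin z = 2 * w / (1 + w ^ 2).
Proof. apply sin_tan_half; lra. Qed.

Let sin_half_sum : sin ((x + y + z) / 2) = C * (e1 - e3).
Proof.
  replace ((x + y + z) / 2) with (x / 2 + y / 2 + z / 2) by field.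
  apply sin_add3_tan; lra.
Qed.

Let cos_half_sum : cos ((x + y + z) / 2) = C * (1 - e2).
Proof.
  replace ((x + y + z) / 2) with (x / 2 + y / 2 + z / 2) by field.
  apply cos_add3_tan; lra.
Qed.

Let sin_sum : sin (x + y + z) = 2 * ((e1 - e3) * (1 - e2)) / U.
Proof.
  replace (x + y + z) with (2 * ((x + y + z) / 2)) at 1 by field.
  rewrite sin_2a, sin_half_sum, cos_half_sum.
  assert (hC : C ^ 2 * U = 1).
  { unfold C, U, u, v, w. rewrite !one_add_tan_sq by lra. field. lra. }
  apply (Rmult_eq_reg_r U); [| lra].
  replace (2 * (C * (e1 - e3)) * (C * (1 - e2)) * U)
    with (2 * ((e1 - e3) * (1 - e2)) * (C ^ 2 * U)) by ring.
  rewrite hC. field. lra.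
Qed.

Let sin_sum_sub : sin (x + y + z) - sin x - sin y - sin z =
  - (4 * ((u + v) * (v + w) * (w + u)) / U).
Proof.
  rewrite sin_sum, sin_x, sin_y, sin_z. unfold U, e1, e2, e3.
  pose proof (pow2_ge_0 u); pose proof (pow2_ge_0 v); pose proof (pow2_ge_0 w).
  field. repeat split; lra.
Qed.

Let sin_sum_add : sin (x + y + z) + sin x + sin y + sin z =
  4 * ((e1 - e3) + e3 * (e2 - 1)) / U.
Proof.
  rewrite sin_sum, sin_x, sin_y, sin_z. unfold U, e1, e2, e3.
  pose proof (pow2_ge_0 u); pose proof (pow2_ge_0 v); pose proof (pow2_ge_0 w).
  field. repeat split; lra.
Qed.

Let sin_prod : sin x * sin y * sin z = 8 * e3 / U.
Proof.
  rewrite sin_x, sin_y, sin_z. unfold U, e3.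
  pose proof (pow2_ge_0 u); pose proof (pow2_ge_0 v); pose proof (pow2_ge_0 w).
  field. repeat split; lra.
Qed.

Lemma sin_sum3_mul_le : x + y + z < PI ->
  sin (x + y + z) * sin x * sin y * sin z * (x + y + z) ^ 2 <=
  16 * (sin (x + y + z) - sin x - sin y - sin z) ^ 2.
Proof.
  intros hS.
  assert (hC : 0 < C) by (unfold C; repeat apply Rmult_lt_0_compat; lra).
  assert (ha : 0 < e1 - e3).
  { assert (0 < sin ((x + y + z) / 2)) by (apply sin_gt_0; lra).
    rewrite sin_half_sum in *. nra. }
  assert (hb : 0 < 1 - e2).
  { assert (0 < cos ((x + y + z) / 2)) by (apply cos_gt_0; lra).
    rewrite cos_half_sum in *. nra. }
  assert (hS6 : x + y + z <= 6 * e1).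
  { unfold e1, u, v, w. pose proof (le_6_tan_half x hx); pose proof (le_6_tan_half y hy);
    pose proof (le_6_tan_half z hz). lra. }
  assert (he3 : 0 < e3) by (apply Rmult_lt_0_compat; [apply Rmult_lt_0_compat |]; assumption).
  assert (hpoly : e3 * ((e1 - e3) * (1 - e2)) * (x + y + z) ^ 2 <=
                  16 * ((u + v) * (v + w) * (w + u)) ^ 2).
  { apply pair_sums_prod_sq_bound; auto. split; [lra | exact hS6]. }
  rewrite sin_sum_sub.
  replace (sin (x + y + z) * sin x * sin y * sin z) with (sin (x + y + z) * (sin x * sin y * sin z))
    by ring.
  rewrite sin_sum, sin_prod.
  replace (2 * ((e1 - e3) * (1 - e2)) / U * (8 * e3 / U) * (x + y + z) ^ 2)
    with (16 * (e3 * ((e1 - e3) * (1 - e2)) * (x + y + z) ^ 2) / U ^ 2) by (field; lra).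
  replace (16 * (- (4 * ((u + v) * (v + w) * (w + u)) / U)) ^ 2)
    with (16 * (16 * ((u + v) * (v + w) * (w + u)) ^ 2) / U ^ 2) by (field; lra).
  unfold Rdiv. apply Rmult_le_compat_r; [apply Rlt_le, Rinv_0_lt_compat; nra | lra].
Qed.

Lemma neg_sin_sum3_mul_le :
  - sin (x + y + z) * sin x * sin y * sin z <=
  / 4 * (sin (x + y + z) + sin x + sin y + sin z) ^ 2.
Proof.
  rewrite sin_sum_add.
  replace (- sin (x + y + z) * sin x * sin y * sin z)
    with (- sin (x + y + z) * (sin x * sin y * sin z)) by ring.
  rewrite sin_sum, sin_prod.
  (* AM-GM for [a] and [b] *)
  set (a := e1 - e3). set (b := e3 * (e2 - 1)).
  replace (- (2 * (a * (1 - e2)) / U) * (8 * e3 / U)) with (16 * (a * b) / U ^ 2)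
    by (unfold b; field; lra).
  replace (/ 4 * (4 * (a + b) / U) ^ 2) with (4 * (a + b) ^ 2 / U ^ 2) by (field; lra).
  unfold Rdiv. apply Rmult_le_compat_r; [apply Rlt_le, Rinv_0_lt_compat; nra |].
  pose proof (pow2_ge_0 (a - b)). nra.
Qed.

End HalfAngleTangents.

(* With [/ 0 = 0] the quotient is 0 at a vanishing denominator. *)
Definition sin_quot (a b c d : R) : R :=
  sin a * sin b * sin c * sin d * (/ (sin a - sin b - sin c - sin d)) ^ 2.

Lemma mul_inv_sq_le (p d B : R) : 0 <= B -> p <= B * d ^ 2 -> p * (/ d) ^ 2 <= B.
Proof.
  intros hB hp. destruct (Req_dec d 0) as [-> | hd].
  - rewrite Rinv_0. lra.
  - assert (hd2 : 0 < d ^ 2) by (rewrite <- Rsqr_pow2; apply Rsqr_pos_lt; exact hd).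
    replace (p * (/ d) ^ 2) with (p * / d ^ 2) by (field; exact hd).
    apply (Rmult_le_reg_r (d ^ 2)); [exact hd2 |].
    rewrite Rmult_assoc, Rinv_l by lra. lra.
Qed.

Lemma sin_quot_reflect (a b c d : R) :
  sin_quot (PI - a) (PI - b) (PI - c) (PI - d) = sin_quot a b c d.
Proof. unfold sin_quot. rewrite !sin_PI_x. reflexivity. Qed.

Lemma sin_quot_sum_le (x y z : R) : 0 < x < PI -> 0 < y < PI -> 0 < z < PI ->
  x + y + z < PI -> sin_quot (x + y + z) x y z <= 16 / (x + y + z) ^ 2.
Proof.
  intros hx hy hz hS. assert (hS2 : 0 < (x + y + z) ^ 2) by (apply pow_lt; lra).
  apply mul_inv_sq_le; [apply Rlt_le, Rdiv_lt_0_compat; lra |].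
  apply (Rmult_le_reg_r ((x + y + z) ^ 2)); [exact hS2 |].
  replace (16 / (x + y + z) ^ 2 * (sin (x + y + z) - sin x - sin y - sin z) ^ 2 * (x + y + z) ^ 2)
    with (16 * (sin (x + y + z) - sin x - sin y - sin z) ^ 2) by (field; lra).
  apply sin_sum3_mul_le; assumption.
Qed.

Lemma sin_quot_sum_sub_PI_le (x y z : R) : 0 < x < PI -> 0 < y < PI -> 0 < z < PI ->
  sin_quot (x + y + z - PI) x y z <= / 4.
Proof.
  intros hx hy hz. unfold sin_quot.
  rewrite sin_minus, sin_PI, cos_PI.
  apply mul_inv_sq_le; [lra |].
  replace ((sin (x + y + z) * -1 - cos (x + y + z) * 0 - sin x - sin y - sin z) ^ 2)
    with ((sin (x + y + z) + sin x + sin y + sin z) ^ 2) by ring.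
  replace ((sin (x + y + z) * -1 - cos (x + y + z) * 0) * sin x * sin y * sin z)
    with (- sin (x + y + z) * sin x * sin y * sin z) by ring.
  apply neg_sin_sum3_mul_le; assumption.
Qed.

Lemma sin_quot_sum_sub_2PI_le (x y z : R) : 0 < x < PI -> 0 < y < PI -> 0 < z < PI ->
  2 * PI < x + y + z -> sin_quot (x + y + z - 2 * PI) x y z <= 16 / (3 * PI - (x + y + z)) ^ 2.
Proof.
  intros hx hy hz hS. rewrite <- sin_quot_reflect.
  replace (PI - (x + y + z - 2 * PI)) with ((PI - x) + (PI - y) + (PI - z)) by ring.
  replace (3 * PI - (x + y + z)) with ((PI - x) + (PI - y) + (PI - z)) by ring.
  apply sin_quot_sum_le; lra.
Qed.

Definition angle (N k : nat) : R := PI * INR k / INR N.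

Lemma angle_add (N a b : nat) : angle N (a + b) = angle N a + angle N b.
Proof. unfold angle. rewrite plus_INR. unfold Rdiv. ring. Qed.

Lemma angle_self (N : nat) : (0 < N)%nat -> angle N N = PI.
Proof. intros hN. unfold angle. field. apply not_0_INR. lia. Qed.

Lemma angle_bounds (N k : nat) : (0 < k < N)%nat -> 0 < angle N k < PI.
Proof.
  intros hk. unfold angle. pose proof PI_RGT_0.
  assert (0 < INR k) by (apply lt_0_INR; lia).
  assert (INR k < INR N) by (apply lt_INR; lia).
  split.
  - apply Rdiv_lt_0_compat; [nra | lra].
  - apply (Rmult_lt_reg_r (INR N)); [lra |]. field_simplify; [nra | lra].
Qed.

Lemma add_mod_inj_r (N a x y : nat) : (x < N)%nat -> (y < N)%nat ->
  (a + x) mod N = (a + y) mod N -> x = y.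
Proof.
  intros hx hy E.
  pose proof (Nat.div_mod_eq (a + x) N) as Ex. pose proof (Nat.div_mod_eq (a + y) N) as Ey.
  rewrite E in Ex.
  destruct (Nat.lt_trichotomy ((a + x) / N) ((a + y) / N)) as [h | [h | h]]; nia.
Qed.

Lemma mod_eq_cases_lt_3N (N k a : nat) : (k < N)%nat -> (a < 3 * N)%nat -> a mod N = k mod N ->
  a = k \/ a = (k + N)%nat \/ a = (k + N + N)%nat.
Proof.
  intros hk ha hm. rewrite (Nat.mod_small k N hk) in hm.
  pose proof (Nat.div_mod_eq a N) as E. rewrite hm in E.
  destruct (a / N)%nat as [| [| [| q]]]; lia.
Qed.

Definition ind (b : bool) : R := if b then 1 else 0.

Lemma ind_nonneg (b : bool) : 0 <= ind b.
Proof. destruct b; simpl; lra. Qed.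

Definition lsum {A : Type} (l : list A) (f : A -> R) : R := fold_right Rplus 0 (map f l).

Lemma lsum_cons {A : Type} (a : A) (l : list A) (f : A -> R) :
  lsum (a :: l) f = f a + lsum l f.
Proof. reflexivity. Qed.

Lemma lsum_le {A : Type} (l : list A) (f g : A -> R) :
  (forall a, In a l -> f a <= g a) -> lsum l f <= lsum l g.
Proof.
  induction l as [| a l IH]; intros H; [apply Rle_refl |]. rewrite !lsum_cons.
  apply Rplus_le_compat; [apply H; left; reflexivity | apply IH; intros; apply H; right; assumption].
Qed.

Lemma lsum_ext {A : Type} (l : list A) (f g : A -> R) :
  (forall a, f a = g a) -> lsum l f = lsum l g.
Proof. intros H. unfold lsum. rewrite (map_ext f g H). reflexivity. Qed.

Lemma lsum_zero {A : Type} (l : list A) (f : A -> R) :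
  (forall a, In a l -> f a = 0) -> lsum l f = 0.
Proof.
  induction l as [| a l IH]; intros H; [reflexivity |].
  rewrite lsum_cons, IH, H; [ring | left; reflexivity |].
  intros b hb. apply H. right. exact hb.
Qed.

Lemma lsum_affine {A : Type} (l : list A) (c0 c1 c2 : R) (f g : A -> R) :
  lsum l (fun a => c0 + f a * c1 + g a * c2) =
  INR (length l) * c0 + lsum l f * c1 + lsum l g * c2.
Proof.
  induction l as [| a l IH]; [unfold lsum; simpl; ring |].
  rewrite !lsum_cons, IH. cbn [length]. rewrite S_INR. ring.
Qed.

Lemma lsum_quadratic {A : Type} (l : list A) (c0 c1 c2 : R) (f g : A -> R) :
  lsum l (fun a => lsum l (fun b => c0 + f a * f b * c1 + g a * g b * c2)) =
  INR (length l) ^ 2 * c0 + lsum l f ^ 2 * c1 + lsum l g ^ 2 * c2.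
Proof.
  rewrite (lsum_ext l _ (fun a => INR (length l) * c0 + f a * (lsum l f * c1)
                                    + g a * (lsum l g * c2))).
  - rewrite lsum_affine. ring.
  - intros a.
    rewrite (lsum_ext l _ (fun b => c0 + f b * (f a * c1) + g b * (g a * c2)))
      by (intros; ring).
    rewrite lsum_affine. ring.
Qed.

Lemma lsum_unique_le {A : Type} (l : list A) (P : A -> Prop)
    (Pdec : forall a, {P a} + {~ P a}) (h : A -> R) (B : R) :
  NoDup l -> (forall a b, In a l -> In b l -> P a -> P b -> a = b) ->
  (forall a, In a l -> P a -> h a <= B) -> 0 <= B ->
  lsum l (fun a => if Pdec a then h a else 0) <= B.
Proof.
  induction l as [| a l IH]; intros hnd huniq hb hB; [exact hB |].
  apply NoDup_cons_iff in hnd as [hnin hnd]. rewrite lsum_cons.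
  destruct (Pdec a) as [ha | ha].
  - rewrite (lsum_zero l), Rplus_0_r; [apply hb; simpl; auto |].
    intros b hbl. destruct (Pdec b) as [hPb | _]; [| reflexivity].
    exfalso. apply hnin. rewrite (huniq a b); simpl; auto.
  - rewrite Rplus_0_l. apply IH; auto.
    + intros b c hbl hcl. apply huniq; simpl; auto.
    + intros b hbl. apply hb; simpl; auto.
Qed.

Lemma lsum_ind_ltb (a n b : nat) :
  lsum (seq a n) (fun k => ind (k <? b)) = INR (Nat.min n (b - a)).
Proof.
  revert a. induction n as [| n IH]; intros a; [reflexivity |].
  cbn [seq]. rewrite lsum_cons, IH. unfold ind. destruct (Nat.ltb_spec a b).
  - replace (Nat.min (S n) (b - a)) with (S (Nat.min n (b - S a))) by lia. rewrite S_INR. ring.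
  - replace (Nat.min (S n) (b - a)) with (Nat.min n (b - S a)) by lia. ring.
Qed.

Lemma lsum_ind_gtb (a n b : nat) :
  lsum (seq a n) (fun k => ind (b <? k)) = INR (n - (S b - a)).
Proof.
  revert a. induction n as [| n IH]; intros a; [reflexivity |].
  cbn [seq]. rewrite lsum_cons, IH. unfold ind. destruct (Nat.ltb_spec b a).
  - replace (S n - (S b - a))%nat with (S (n - (S b - S a))) by lia. rewrite S_INR. ring.
  - replace (S n - (S b - a))%nat with (n - (S b - S a))%nat by lia. ring.
Qed.

Lemma sin_quot_angle_le (N k1 k2 k3 k4 : nat) :
  (0 < k1 < N)%nat -> (0 < k2 < N)%nat -> (0 < k3 < N)%nat -> (0 < k4 < N)%nat ->
  (k2 + k3 + k4) mod N = k1 mod N ->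
  sin_quot (angle N k1) (angle N k2) (angle N k3) (angle N k4) <=
  / 4 + ind (k2 <? k1) * ind (k3 <? k1) * (16 / angle N k1 ^ 2)
      + ind (k1 <? k2) * ind (k1 <? k3) * (16 / (PI - angle N k1) ^ 2).
Proof.
  intros h1 h2 h3 h4 hmod.
  pose proof (angle_bounds N k1 h1) as t1. pose proof (angle_bounds N k2 h2) as t2.
  pose proof (angle_bounds N k3 h3) as t3. pose proof (angle_bounds N k4 h4) as t4.
  assert (hsum : angle N k2 + angle N k3 + angle N k4 = angle N (k2 + k3 + k4))
    by (rewrite !angle_add; reflexivity).
  assert (hPI := angle_self N ltac:(lia)).
  assert (0 <= 16 / angle N k1 ^ 2) by (apply Rlt_le, Rdiv_lt_0_compat; [lra | apply pow_lt; lra]).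
  assert (0 <= 16 / (PI - angle N k1) ^ 2)
    by (apply Rlt_le, Rdiv_lt_0_compat; [lra | apply pow_lt; lra]).
  pose proof (ind_nonneg (k2 <? k1)); pose proof (ind_nonneg (k3 <? k1));
  pose proof (ind_nonneg (k1 <? k2)); pose proof (ind_nonneg (k1 <? k3)).
  assert (0 <= ind (k2 <? k1) * ind (k3 <? k1) * (16 / angle N k1 ^ 2))
    by (apply Rmult_le_pos; [apply Rmult_le_pos |]; assumption).
  assert (0 <= ind (k1 <? k2) * ind (k1 <? k3) * (16 / (PI - angle N k1) ^ 2))
    by (apply Rmult_le_pos; [apply Rmult_le_pos |]; assumption).
  destruct (mod_eq_cases_lt_3N N k1 (k2 + k3 + k4) ltac:(lia) ltac:(lia) hmod) as [E | [E | E]];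
    rewrite E, ?angle_add, ?hPI in hsum.
  - replace (k2 <? k1)%nat with true by (symmetry; apply Nat.ltb_lt; lia).
    replace (k3 <? k1)%nat with true by (symmetry; apply Nat.ltb_lt; lia).
    pose proof (sin_quot_sum_le _ _ _ t2 t3 t4 ltac:(lra)) as hq. rewrite hsum in hq.
    simpl ind. lra.
  - pose proof (sin_quot_sum_sub_PI_le _ _ _ t2 t3 t4) as hq.
    replace (angle N k2 + angle N k3 + angle N k4 - PI) with (angle N k1) in hq by lra.
    lra.
  - replace (k1 <? k2)%nat with true by (symmetry; apply Nat.ltb_lt; lia).
    replace (k1 <? k3)%nat with true by (symmetry; apply Nat.ltb_lt; lia).
    pose proof (sin_quot_sum_sub_2PI_le _ _ _ t2 t3 t4 ltac:(lra)) as hq.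
    replace (angle N k2 + angle N k3 + angle N k4 - 2 * PI) with (angle N k1) in hq by lra.
    replace (3 * PI - (angle N k2 + angle N k3 + angle N k4)) with (PI - angle N k1) in hq by lra.
    simpl ind. lra.
Qed.

Definition A1_scale (kappa m : R) : R :=
  (3 / (4 * kappa ^ 2)) ^ 2 * (2 * sqrt (kappa / m)) ^ 2.

Lemma A1_scale_pos (kappa m : R) : 0 < kappa -> 0 < m -> 0 < A1_scale kappa m.
Proof.
  intros hk hm. unfold A1_scale.
  assert (0 < sqrt (kappa / m)) by (apply sqrt_lt_R0, Rdiv_lt_0_compat; lra).
  assert (0 < 3 / (4 * kappa ^ 2)) by (apply Rdiv_lt_0_compat; nra).
  apply Rmult_lt_0_compat; apply pow_lt; lra.
Qed.

Lemma iota_sq_le (N k : nat) : iota N k ^ 2 <= 1.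
Proof.
  unfold iota, Rsgn.
  destruct (Rlt_dec 0 _); [lra |]. destruct (Rlt_dec _ 0); lra.
Qed.

Lemma omega_nonneg (kappa m : R) (N k : nat) : 0 <= omega kappa m N k.
Proof.
  unfold omega. apply Rmult_le_pos; [| apply Rabs_pos].
  apply Rmult_le_pos; [lra | apply sqrt_pos].
Qed.

Lemma Tcoef_sq_le (kappa m : R) (N k1 k2 k3 k4 : nat) :
  Tcoef kappa m N k1 k2 k3 k4 ^ 2 <=
  (3 / (4 * kappa ^ 2)) ^ 2 *
  (omega kappa m N k1 * omega kappa m N k2 * omega kappa m N k3 * omega kappa m N k4).
Proof.
  unfold Tcoef.
  set (a := 3 / (4 * kappa ^ 2)).
  set (i := iota N (k2 + k3 + k4) * iota N k2 * iota N k3 * iota N k4).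
  set (W := omega kappa m N k1 * omega kappa m N k2 * omega kappa m N k3 * omega kappa m N k4).
  assert (hi : i ^ 2 <= 1).
  { unfold i. rewrite !Rpow_mult_distr.
    pose proof (iota_sq_le N (k2 + k3 + k4)); pose proof (iota_sq_le N k2);
    pose proof (iota_sq_le N k3); pose proof (iota_sq_le N k4).
    pose proof (pow2_ge_0 (iota N (k2 + k3 + k4))); pose proof (pow2_ge_0 (iota N k2));
    pose proof (pow2_ge_0 (iota N k3)); pose proof (pow2_ge_0 (iota N k4)).
    assert (0 <= iota N (k2 + k3 + k4) ^ 2 * iota N k2 ^ 2 <= 1) by (split; nra).
    assert (0 <= iota N k3 ^ 2 * iota N k4 ^ 2 <= 1) by (split; nra).
    nra. }
  replace ((- a * iota N (k2 + k3 + k4) * iota N k2 * iota N k3 * iota N k4 *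
      (sqrt (omega kappa m N k1) * sqrt (omega kappa m N k2) *
       sqrt (omega kappa m N k3) * sqrt (omega kappa m N k4))) ^ 2)
    with (a ^ 2 * i ^ 2 * (sqrt (omega kappa m N k1) ^ 2 * sqrt (omega kappa m N k2) ^ 2 *
       sqrt (omega kappa m N k3) ^ 2 * sqrt (omega kappa m N k4) ^ 2)) by (unfold i; ring).
  rewrite !pow2_sqrt by apply omega_nonneg. fold W.
  assert (0 <= a ^ 2 * W)
    by (apply Rmult_le_pos; [apply pow2_ge_0 | unfold W;
      apply Rmult_le_pos; [apply Rmult_le_pos; [apply Rmult_le_pos |] |]; apply omega_nonneg]).
  nra.
Qed.

(* [Defs.A1], since [Reals] also exports an [A1]. *)
Lemma A1_sq_le_sin_quot (kappa m : R) (N k1 k2 k3 k4 : nat) : 0 < kappa -> 0 < m ->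
  0 <= sin (angle N k1) -> 0 <= sin (angle N k2) -> 0 <= sin (angle N k3) ->
  0 <= sin (angle N k4) ->
  Rabs (Defs.A1 kappa m N k1 k2 k3 k4) ^ 2 <=
  A1_scale kappa m * sin_quot (angle N k1) (angle N k2) (angle N k3) (angle N k4).
Proof.
  intros hk hm h1 h2 h3 h4.
  set (c := 2 * sqrt (kappa / m)).
  assert (hc : 0 < c) by (apply Rmult_lt_0_compat; [lra | apply sqrt_lt_R0, Rdiv_lt_0_compat; lra]).
  assert (homega : forall k, 0 <= sin (angle N k) -> omega kappa m N k = c * sin (angle N k))
    by (intros k hk'; unfold omega; rewrite Rabs_pos_eq by exact hk'; reflexivity).
  pose proof (Tcoef_sq_le kappa m N k1 k2 k3 k4) as hT.
  rewrite !homega in hT by assumption.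
  unfold Defs.A1, A1_scale, sin_quot. fold c. rewrite pow2_abs, !homega by assumption.
  set (s1 := sin (angle N k1)) in *; set (s2 := sin (angle N k2)) in *;
  set (s3 := sin (angle N k3)) in *; set (s4 := sin (angle N k4)) in *.
  set (d := / (s1 - s2 - s3 - s4)).
  replace ((- Tcoef kappa m N k1 k2 k3 k4 / (c * s1 - c * s2 - c * s3 - c * s4)) ^ 2)
    with (Tcoef kappa m N k1 k2 k3 k4 ^ 2 * ((/ c) ^ 2 * d ^ 2))
    by (unfold d, Rdiv; replace (c * s1 - c * s2 - c * s3 - c * s4) with (c * (s1 - s2 - s3 - s4))
          by ring; rewrite Rinv_mult; ring).
  assert (0 <= (/ c) ^ 2 * d ^ 2) by (apply Rmult_le_pos; apply pow2_ge_0).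
  apply Rle_trans with
    ((3 / (4 * kappa ^ 2)) ^ 2 * (c * s1 * (c * s2) * (c * s3) * (c * s4)) * ((/ c) ^ 2 * d ^ 2)).
  - apply Rmult_le_compat_r; assumption.
  - right. field. lra.
Qed.

Lemma A1_sq_le (kappa m : R) (N k1 k2 k3 k4 : nat) : 0 < kappa -> 0 < m ->
  (0 < k1 < N)%nat -> (0 < k2 < N)%nat -> (0 < k3 < N)%nat -> (0 < k4 < N)%nat ->
  (k2 + k3 + k4) mod N = k1 mod N ->
  Rabs (Defs.A1 kappa m N k1 k2 k3 k4) ^ 2 <=
  A1_scale kappa m / 4
  + ind (k2 <? k1) * ind (k3 <? k1) * (A1_scale kappa m * (16 / angle N k1 ^ 2))
  + ind (k1 <? k2) * ind (k1 <? k3) * (A1_scale kappa m * (16 / (PI - angle N k1) ^ 2)).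
Proof.
  intros hk hm h1 h2 h3 h4 hmod.
  assert (hsin : forall k, (0 < k < N)%nat -> 0 <= sin (angle N k))
    by (intros k hk'; pose proof (angle_bounds N k hk'); apply sin_ge_0; lra).
  eapply Rle_trans; [apply A1_sq_le_sin_quot; auto |].
  eapply Rle_trans.
  { apply Rmult_le_compat_l; [apply Rlt_le, A1_scale_pos; assumption |].
    apply sin_quot_angle_le; assumption. }
  right. unfold Rdiv. ring.
Qed.

Lemma S1_le_counts (kappa m : R) (N k1 : nat) : 0 < kappa -> 0 < m -> (0 < k1 < N)%nat ->
  S1 kappa m N k1 <=
  INR (N - 1) ^ 2 * (A1_scale kappa m / 4)
  + INR (k1 - 1) ^ 2 * (A1_scale kappa m * (16 / angle N k1 ^ 2))
  + INR (N - 1 - k1) ^ 2 * (A1_scale kappa m * (16 / (PI - angle N k1) ^ 2)).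
Proof.
  intros hk hm h1.
  set (L := seq 1 (N - 1)).
  set (c0 := A1_scale kappa m / 4).
  set (c1 := A1_scale kappa m * (16 / angle N k1 ^ 2)).
  set (c2 := A1_scale kappa m * (16 / (PI - angle N k1) ^ 2)).
  assert (hK := A1_scale_pos kappa m hk hm).
  pose proof (angle_bounds N k1 h1).
  assert (0 <= c1) by (apply Rmult_le_pos, Rlt_le, Rdiv_lt_0_compat; try apply pow_lt; lra).
  assert (0 <= c2) by (apply Rmult_le_pos, Rlt_le, Rdiv_lt_0_compat; try apply pow_lt; lra).
  change (S1 kappa m N k1) with (lsum L (fun k2 => lsum L (fun k3 => lsum L (fun k4 =>
    if Nat.eq_dec ((k2 + k3 + k4) mod N) (k1 mod N)
    then Rabs (Defs.A1 kappa m N k1 k2 k3 k4) ^ 2 else 0)))).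
  eapply Rle_trans.
  { apply lsum_le; intros k2 hk2; apply lsum_le; intros k3 hk3.
    apply in_seq in hk2, hk3.
    apply (lsum_unique_le L (fun k4 => (k2 + k3 + k4) mod N = k1 mod N)
             (fun k4 => Nat.eq_dec _ _) _
             (c0 + ind (k2 <? k1) * ind (k3 <? k1) * c1 + ind (k1 <? k2) * ind (k1 <? k3) * c2)).
    - apply seq_NoDup.
    - intros a b ha hb Ea Eb. apply in_seq in ha, hb.
      apply (add_mod_inj_r N (k2 + k3)); [lia | lia |]. rewrite Ea, Eb. reflexivity.
    - intros k4 hk4 E. apply in_seq in hk4. apply A1_sq_le; auto; lia.
    - assert (0 <= c0) by (unfold c0; lra).
      assert (0 <= ind (k2 <? k1) * ind (k3 <? k1) * c1)
        by (apply Rmult_le_pos; [apply Rmult_le_pos; apply ind_nonneg | assumption]).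
      assert (0 <= ind (k1 <? k2) * ind (k1 <? k3) * c2)
        by (apply Rmult_le_pos; [apply Rmult_le_pos; apply ind_nonneg | assumption]).
      lra. }
  rewrite (lsum_quadratic L c0 c1 c2 (fun k => ind (k <? k1)) (fun k => ind (k1 <? k))).
  unfold L. rewrite length_seq, lsum_ind_ltb, lsum_ind_gtb.
  replace (Nat.min (N - 1) (k1 - 1)) with (k1 - 1)%nat by lia.
  replace (N - 1 - (S k1 - 1))%nat with (N - 1 - k1)%nat by lia.
  apply Rle_refl.
Qed.

Lemma PI_sub_angle (N k : nat) : (0 < N)%nat -> (k <= N)%nat -> PI - angle N k = angle N (N - k).
Proof.
  intros hN hk. unfold angle. rewrite minus_INR by exact hk.
  field. apply not_0_INR. lia.
Qed.

Lemma sq_mul_div_angle_sq_le (N j k : nat) : (0 < k < N)%nat -> (j <= k)%nat ->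
  INR j ^ 2 * (16 / angle N k ^ 2) <= 16 * INR N ^ 2 / PI ^ 2.
Proof.
  intros hk hj. pose proof PI_RGT_0.
  assert (0 < INR k) by (apply lt_0_INR; lia).
  assert (0 < INR N) by (apply lt_0_INR; lia).
  assert (0 <= INR j <= INR k) by (split; [apply pos_INR | apply le_INR; exact hj]).
  replace (16 / angle N k ^ 2) with (16 * INR N ^ 2 / PI ^ 2 / INR k ^ 2)
    by (unfold angle; field; lra).
  assert (0 < 16 * INR N ^ 2 / PI ^ 2)
    by (apply Rdiv_lt_0_compat; [apply Rmult_lt_0_compat; [lra |] |]; apply pow_lt; lra).
  apply (Rmult_le_reg_r (INR k ^ 2)); [apply pow_lt; lra |].
  replace (INR j ^ 2 * (16 * INR N ^ 2 / PI ^ 2 / INR k ^ 2) * INR k ^ 2)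
    with (16 * INR N ^ 2 / PI ^ 2 * INR j ^ 2) by (field; lra).
  apply Rmult_le_compat_l; nra.
Qed.

Lemma S1_le_sq (kappa m : R) (N k1 : nat) : 0 < kappa -> 0 < m -> (0 < k1 < N)%nat ->
  S1 kappa m N k1 <= A1_scale kappa m * (/ 4 + 32 / PI ^ 2) * INR N ^ 2.
Proof.
  intros hk hm h1.
  eapply Rle_trans; [apply S1_le_counts; assumption |].
  set (K := A1_scale kappa m). assert (hK : 0 < K) by exact (A1_scale_pos kappa m hk hm).
  assert (hlow : INR (k1 - 1) ^ 2 * (16 / angle N k1 ^ 2) <= 16 * INR N ^ 2 / PI ^ 2)
    by (apply sq_mul_div_angle_sq_le; lia).
  assert (hhigh : INR (N - 1 - k1) ^ 2 * (16 / (PI - angle N k1) ^ 2) <= 16 * INR N ^ 2 / PI ^ 2)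
    by (rewrite PI_sub_angle by lia; apply sq_mul_div_angle_sq_le; lia).
  assert (hN1 : INR (N - 1) ^ 2 <= INR N ^ 2)
    by (apply pow_incr; split; [apply pos_INR | apply le_INR; lia]).
  replace (K * (/ 4 + 32 / PI ^ 2) * INR N ^ 2)
    with (K * (INR N ^ 2 / 4 + 16 * INR N ^ 2 / PI ^ 2 + 16 * INR N ^ 2 / PI ^ 2))
    by (field; apply Rgt_not_eq, PI_RGT_0).
  replace (INR (N - 1) ^ 2 * (K / 4) + INR (k1 - 1) ^ 2 * (K * (16 / angle N k1 ^ 2))
           + INR (N - 1 - k1) ^ 2 * (K * (16 / (PI - angle N k1) ^ 2)))
    with (K * (INR (N - 1) ^ 2 / 4 + INR (k1 - 1) ^ 2 * (16 / angle N k1 ^ 2)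
               + INR (N - 1 - k1) ^ 2 * (16 / (PI - angle N k1) ^ 2))) by (unfold Rdiv; ring).
  apply Rmult_le_compat_l; lra.
Qed.

Theorem mainTheorem2 (kappa m : R) (hkappa : 0 < kappa) (hm : 0 < m) :
  exists C : R, 0 < C /\
    forall (N k1 : nat), (2 <= N)%nat -> (0 < k1)%nat -> (k1 < N)%nat ->
      S1 kappa m N k1 <= C * (INR N) ^ 2.
Proof.
  exists (A1_scale kappa m * (/ 4 + 32 / PI ^ 2)). split.
  - apply Rmult_lt_0_compat; [exact (A1_scale_pos kappa m hkappa hm) |].
    assert (0 < 32 / PI ^ 2) by (apply Rdiv_lt_0_compat; [lra | apply pow_lt, PI_RGT_0]).
    lra.
  - intros N k1 _ h1 h1'. apply S1_le_sq; auto.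
Qed.
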